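(* Under the hypotheses and notation below, for every cluster $\mathrm{Cl}(y)$ and every $y'\in\mathrm{Cl}(y)$, we have $y'+e_Z(H_Zy')\in y+e_Z(H_Zy)+C_X^\perp$.
   Context: $\mathcal{C}=\mathrm{CSS}(C_X=\ker H_X,C_Z=\ker H_Z)$ is an $[[n,k,d]]_2$ CSS code ($H_Z\in\mathbb{F}_2^{m_Z\times n}$, $C_X^\perp\subseteq C_Z$) exhibiting $(c_1,c_2,\epsilon_0)$-clustering (for all $0<\epsilon<\epsilon_0$, every $y$ with $|H_Zy|\le\epsilon m_Z$ has $|y|_{C_X^\perp}\le c_1\epsilon n$ or $\ge c_2n$, and symmetrically for $X$), where $|y|_C=\min_{y'\in C}|y+y'|$. Let $\epsilon<\frac{1}{1000}\min\{\frac{\epsilon_0}{2},\frac{c_2}{4c_1},\frac{d}{2c_1n}\}$, $\epsilon'=1000\epsilon$, $G_Z^{\epsilon'}=\{y:|H_Zy|\le\epsilon'm_Z\}$. For $y\in G_Z^{\epsilon'}$, $\mathrm{Cl}(y)=\{y'\in G_Z^{\epsilon'}:|y+y'|_{C_X^\perp}\le2c_1\epsilon'n\}$; these clusters partition $G_Z^{\epsilon'}$, and $\mathrm{Cl}(y+c)=\mathrm{Cl}(y)+c$ for $c\in C_Z$. For each cluster let $\mathcal{T}(\mathrm{Cl}(y))=\{\mathrm{Cl}(y+c):c\in C_Z\}$ be its collection of translates, and for each such collection $\mathcal{T}$ fix an arbitrary representative cluster $R(\mathcal{T})\in\mathcal{T}$. For each syndrome $s=H_Zy$ with $y\in G_Z^{\epsilon'}$,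 fix an arbitrary element $e_Z(s)\in(y+C_Z)\cap R(\mathcal{T}(\mathrm{Cl}(y)))$ (this set is a nonempty coset of $C_X^\perp$, and it depends only on $s$). *)

From HB Require Import structures.
From mathcomp Require Import all_boot all_order all_algebra.
From mathcomp Require Import reals.
Set Implicit Arguments. Unset Strict Implicit. Unset Printing Implicit Defensive.
Import Order.TTheory GRing.Theory Num.Theory.
Local Open Scope ring_scope.

Notation vec n := 'cV['F_2]_n.

Definition wt (m : nat) (v : vec m) : nat := #|[set i | v i 0 != 0]|.

Definition kerH (m n : nat) (H : 'M['F_2]_(m, n)) : {set vec n} :=
  [set y | H *m y == 0].

Definition dual (n : nat) (C : {set vec n}) : {set vec n} :=
  [set x | [forall c in C, x^T *m c == 0]].

(* |y|_C = min_{y' in C} |y + y'|  (C is always nonempty where used;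
   the default n is an upper bound of every weight) *)
Definition distC (n : nat) (y : vec n) (C : {set vec n}) : nat :=
  \big[minn/n]_(c in C) wt (y + c).

Definition coset (n : nat) (y : vec n) (C : {set vec n}) : {set vec n} :=
  [set y + c | c in C].

(* minimum distance d of CSS(ker HX, ker HZ): min weight of a nontrivial
   logical operator (convention: n if there are none, i.e. k = 0) *)
Definition css_dist (mX mZ n : nat) (HX : 'M['F_2]_(mX, n)) (HZ : 'M['F_2]_(mZ, n)) : nat :=
  minn (\big[minn/n]_(z in kerH HZ :\: dual (kerH HX)) wt z)
       (\big[minn/n]_(x in kerH HX :\: dual (kerH HZ)) wt x).

Definition clustering (R : realType) (mX mZ n : nat)
  (HX : 'M['F_2]_(mX, n)) (HZ : 'M['F_2]_(mZ, n)) (c1 c2 eps0 : R) : Prop :=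
  0 < c1 /\ 0 < c2 /\ 0 < eps0 /\
  forall eps : R, 0 < eps -> eps < eps0 ->
    (forall y : vec n, (wt (HZ *m y))%:R <= eps * mZ%:R ->
        (distC y (dual (kerH HX)))%:R <= c1 * eps * n%:R \/
        c2 * n%:R <= (distC y (dual (kerH HX)))%:R) /\
    (forall x : vec n, (wt (HX *m x))%:R <= eps * mX%:R ->
        (distC x (dual (kerH HZ)))%:R <= c1 * eps * n%:R \/
        c2 * n%:R <= (distC x (dual (kerH HZ)))%:R).

Definition goodZ (R : realType) (mZ n : nat) (HZ : 'M['F_2]_(mZ, n)) (eps' : R)
  : {set vec n} := [set y | (wt (HZ *m y))%:R <= eps' * mZ%:R].

Definition cluster (R : realType) (mX mZ n : nat)
  (HX : 'M['F_2]_(mX, n)) (HZ : 'M['F_2]_(mZ, n)) (c1 eps' : R) (y : vec n)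
  : {set vec n} :=
  [set y' in goodZ HZ eps' |
     (distC (y + y') (dual (kerH HX)))%:R <= 2 * c1 * eps' * n%:R].

Definition translates (R : realType) (mX mZ n : nat)
  (HX : 'M['F_2]_(mX, n)) (HZ : 'M['F_2]_(mZ, n)) (c1 eps' : R) (y : vec n)
  : {set {set vec n}} :=
  [set cluster HX HZ c1 eps' (y + c) | c in kerH HZ].

(* Closeness to C_X^perp of the sum of two vectors of G_Z^eps' is transitive
   thanks to the clustering gap (4 c1 eps' < c2), so clusters are equivalence
   classes, compatible with translation by C_Z.  Hence y and y' have the same
   translates and the same representative cluster, e_Z(H_Z y) and e_Z(H_Z y')
   lie in a common cluster, and v = y + e_Z(H_Z y) + y' + e_Z(H_Z y') is a
   codeword of C_Z within distance 4 c1 eps' n of C_X^perp.  Having zero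
   syndrome, v satisfies the clustering dichotomy for every small eps, which
   puts it in C_X^perp. *)
From HB Require Import structures.
From mathcomp Require Import all_boot all_order all_algebra.
From mathcomp Require Import reals.
From mathcomp Require Import lra.
Import Order.TTheory GRing.Theory Num.Theory.
Local Open Scope ring_scope.
Set Implicit Arguments. Unset Strict Implicit.

Section HammingDistance.
Variable n : nat.
Implicit Types (u v y a b c : vec n) (C : {set vec n}).

Lemma addvv v : v + v = 0.
Proof.
apply/matrixP => i j; rewrite !mxE.
exact: (addrr_pchar2 (pchar_Fp (isT : prime 2))).
Qed.

Lemma wt_eq0 v : (wt v == 0%N) = (v == 0).
Proof.
rewrite cards_eq0; apply/eqP/eqP => [v0|->]; last first.
  by apply/setP => i; rewrite !inE mxE eqxx.
apply/matrixP => i j; rewrite (ord1 j) mxE; apply/eqP/negPn/negP => vi0.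
by have := in_set0 i; rewrite -v0 inE vi0.
Qed.

Lemma wt_le v : (wt v <= n)%N.
Proof. by apply: leq_trans (max_card _) _; rewrite card_ord. Qed.

Lemma wtD u v : (wt (u + v) <= wt u + wt v)%N.
Proof.
apply: leq_trans (leq_card_setU _ _); apply: subset_leq_card.
apply/subsetP => i; rewrite !inE mxE; apply: contraR.
by rewrite negb_or !negbK => /andP[/eqP -> /eqP ->]; rewrite addr0.
Qed.

Lemma mem_cosetF2 a b C : (a \in coset b C) = (b + a \in C).
Proof.
apply/imsetP/idP => [[c cC ->]|baC]; first by rewrite addrA addvv add0r.
by exists (b + a); rewrite // addrA addvv add0r.
Qed.

Lemma dual0 C : 0 \in dual C.
Proof. by rewrite inE; apply/forall_inP => c _; rewrite trmx0 mul0mx. Qed.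

Lemma dualD C a b : a \in dual C -> b \in dual C -> a + b \in dual C.
Proof.
rewrite !inE => /forall_inP aC /forall_inP bC; apply/forall_inP => c cC.
by rewrite linearD mulmxDl (eqP (aC c cC)) (eqP (bC c cC)) addr0.
Qed.

Lemma distC_le y c C : c \in C -> (distC y C <= wt (y + c))%N.
Proof.
by move=> cC; rewrite /distC -minEnat; exact: (@bigmin_le_cond _ _ _ n c (mem C) _ cC).
Qed.

Lemma distC_le_n y C : (distC y C <= n)%N.
Proof.
by rewrite /distC -minEnat; exact: (@bigmin_le_id _ _ _ (index_enum _) n (mem C)).
Qed.

Lemma distC_attained y C : 0 \in C -> exists2 c, c \in C & distC y C = wt (y + c).
Proof.
move=> C0; rewrite /distC -minEnat.
have [c cC ->] := @eq_bigmin _ _ _ n 0 (mem C) (fun c => wt (y + c)) C0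
  (fun c _ => wt_le (y + c)).
by exists c.
Qed.

Lemma distC_dualD C a b :
  (distC (a + b) (dual C) <= distC a (dual C) + distC b (dual C))%N.
Proof.
have [ca caC ->] := distC_attained a (dual0 C).
have [cb cbC ->] := distC_attained b (dual0 C).
apply: leq_trans (distC_le (a + b) (dualD caC cbC)) _.
by rewrite addrACA wtD.
Qed.

Lemma distC_dual_eq0 C v : distC v (dual C) = 0%N -> v \in dual C.
Proof.
have [c cC ->] := distC_attained v (dual0 C).
move/eqP; rewrite wt_eq0 => /eqP vc0.
by rewrite -[v]addr0 -(addvv c) addrA vc0 add0r.
Qed.

End HammingDistance.

Section Syndromes.
Variables (R : realType) (m n : nat) (H : 'M['F_2]_(m, n)).
Implicit Types (y a b c : vec n) (e : R).

Lemma kerHD a b : a \in kerH H -> b \in kerH H -> a + b \in kerH H.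
Proof. by rewrite !inE mulmxDr => /eqP -> /eqP ->; rewrite addr0. Qed.

Lemma goodZD e1 e2 a b :
  a \in goodZ H e1 -> b \in goodZ H e2 -> a + b \in goodZ H (e1 + e2).
Proof.
rewrite !inE mulmxDr mulrDl => ha hb.
by apply: le_trans (lerD ha hb); rewrite -natrD ler_nat wtD.
Qed.

Lemma goodZ_kerD e y c : c \in kerH H -> (y + c \in goodZ H e) = (y \in goodZ H e).
Proof. by rewrite !inE mulmxDr => /eqP ->; rewrite addr0. Qed.

End Syndromes.

Section Clusters.
Variables (R : realType) (mX mZ n : nat).
Variables (HX : 'M['F_2]_(mX, n)) (HZ : 'M['F_2]_(mZ, n)) (c1 c2 eps0 : R).
Hypothesis hclust : clustering HX HZ c1 c2 eps0.
Local Notation CXperp := (dual (kerH HX)).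
Implicit Types (y a b c d v z : vec n).

Lemma far_distC_eq0 (k : R) v : k < c2 ->
  (distC v CXperp)%:R <= k * n%:R -> c2 * n%:R <= (distC v CXperp)%:R ->
  distC v CXperp = 0%N.
Proof.
move=> k_lt_c2 d_le d_ge; apply/eqP; rewrite -leqn0 -(ler_nat R).
have d_le_n : (distC v CXperp)%:R <= n%:R :> R by rewrite ler_nat distC_le_n.
have d_ge0 : 0 <= (distC v CXperp)%:R :> R by [].
nra.
Qed.

(* A codeword of C_Z has zero syndrome, which is below every threshold eps:
   letting eps tend to 0 leaves only distance 0 or the far regime. *)
Lemma kerZ_dual_or_far v : v \in kerH HZ ->
  v \in CXperp \/ c2 * n%:R <= (distC v CXperp)%:R.
Proof.
move=> vZ; have [c1_gt0 [_ [eps0_gt0 hcl]]] := hclust.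
pose eps1 := Num.min (eps0 / 2) (c1 * n.+1%:R)^-1.
have n1_gt0 : 0 < n.+1%:R :> R by rewrite ltr0Sn.
have eps1_gt0 : 0 < eps1 by rewrite lt_min divr_gt0 //= invr_gt0 mulr_gt0.
have eps1_lt : eps1 < eps0 by rewrite gt_min ltr_pdivrMr //; lra.
have syn : (wt (HZ *m v))%:R <= eps1 * mZ%:R.
  move: vZ; rewrite inE => /eqP ->.
  have /eqP -> : wt (0 : 'cV['F_2]_mZ) == 0%N by rewrite wt_eq0.
  exact: mulr_ge0 (ltW eps1_gt0) (ler0n _ _).
have [near|] := (hcl eps1 eps1_gt0 eps1_lt).1 v syn; last by right.
left; apply: distC_dual_eq0; apply/eqP; rewrite -leqn0 -ltnS -(ltr_nat R).
have : eps1 * (c1 * n.+1%:R) <= 1.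
  by rewrite -ler_pdivlMr ?mulr_gt0 // div1r ge_min lexx orbT.
rewrite -natr1 => eps1_small.
have : 0 < c1 * eps1 by rewrite mulr_gt0.
lra.
Qed.

Lemma kerZ_mem_dual (k : R) v : k < c2 -> v \in kerH HZ ->
  (distC v CXperp)%:R <= k * n%:R -> v \in CXperp.
Proof.
move=> k_lt_c2 vZ d_le; have [//|far] := kerZ_dual_or_far vZ.
exact/distC_dual_eq0/(far_distC_eq0 k_lt_c2).
Qed.

Section Cluster.
Variable eps : R.
Hypotheses (eps_lt : 2 * eps < eps0) (eps_gap : 4 * c1 * eps < c2).
Local Notation good := (goodZ HZ eps).
Local Notation Cl := (cluster HX HZ c1 eps).
Local Notation close a b := ((distC (a + b) CXperp)%:R <= 2 * c1 * eps * n%:R).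

Lemma distC_close_sum a b c d : close a b -> close c d ->
  (distC ((a + b) + (c + d)) CXperp)%:R <= 4 * c1 * eps * n%:R.
Proof.
move=> ab cd.
apply: le_trans (_ : (distC (a + b) CXperp + distC (c + d) CXperp)%:R <= _).
  by rewrite ler_nat distC_dualD.
by rewrite natrD; lra.
Qed.

(* The clustering gap at 2 eps makes closeness transitive: the intermediate
   point need not even have a small syndrome. *)
Lemma close_trans a b z :
  a \in good -> z \in good -> close a b -> close b z -> close a z.
Proof.
move=> a_good z_good ab bz.
have az : (distC (a + z) CXperp)%:R <= 4 * c1 * eps * n%:R.
  have -> : a + z = (a + b) + (b + z) by rewrite addrA -(addrA a) addvv addr0.
  exact: distC_close_sum.
have [c1_gt0 [_ [_ hcl]]] := hclust.
have n_ge0 : 0 <= n%:R :> R by [].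
have [eps_le0|eps_gt0] := lerP eps 0.
  have : eps * n%:R <= 0 by rewrite mulr_le0_ge0.
  nra.
have eps2_gt0 : 0 < 2 * eps by rewrite mulr_gt0.
have : a + z \in goodZ HZ (2 * eps).
  by rewrite mulr_natl mulr2n; apply: goodZD.
rewrite inE => az_good.
have [near|far] := (hcl _ eps2_gt0 eps_lt).1 (a + z) az_good.
  lra.
rewrite (far_distC_eq0 eps_gap az far).
by rewrite !mulr_ge0 // ltW.
Qed.

Lemma cluster_close y a b : a \in Cl y -> b \in Cl y -> close a b.
Proof.
move=> /setIdP[a_good ya] /setIdP[b_good yb].
by apply: close_trans a_good b_good _ yb; rewrite addrC.
Qed.

Lemma cluster_eq y y' : y \in good -> y' \in Cl y -> Cl y = Cl y'.
Proof.
move=> y_good /setIdP[y'_good yy']; apply/setP => z.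
apply/setIdP/setIdP => -[z_good yz]; split => //.
  by apply: close_trans y'_good z_good _ yz; rewrite addrC.
exact: close_trans y_good z_good yy' yz.
Qed.

Lemma mem_cluster_kerD y y' c :
  c \in kerH HZ -> y' \in Cl y -> y' + c \in Cl (y + c).
Proof.
move=> cZ /setIdP[y'_good yy']; apply/setIdP.
split; first by rewrite goodZ_kerD.
by rewrite addrACA addvv addr0.
Qed.

Lemma translates_eq y y' : y \in good -> y' \in Cl y ->
  translates HX HZ c1 eps y' = translates HX HZ c1 eps y.
Proof.
move=> y_good yy'; apply: eq_in_imset => c cZ /=; symmetry.
by apply: cluster_eq; [rewrite goodZ_kerD | exact: mem_cluster_kerD].
Qed.

End Cluster.
End Clusters.

Lemma small_eps_bounds (R : realType) (c1 c2 eps0 r eps : R) : 0 < c1 ->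
  eps < 1000^-1 * Num.min (eps0 / 2) (Num.min (c2 / (4 * c1)) r) ->
  2 * (1000 * eps) < eps0 /\ 4 * c1 * (1000 * eps) < c2.
Proof.
move=> c1_gt0 eps_small.
have : 1000 * eps < Num.min (eps0 / 2) (Num.min (c2 / (4 * c1)) r) by lra.
rewrite !lt_min ltr_pdivlMr // ltr_pdivlMr ?mulr_gt0 // => /and3P[? ? _].
by split; lra.
Qed.

Theorem lemma4p11 (R : realType) (mX mZ n : nat)
  (HX : 'M['F_2]_(mX, n)) (HZ : 'M['F_2]_(mZ, n)) (c1 c2 eps0 eps : R)
  (hCSS : dual (kerH HX) \subset kerH HZ)
  (hclust : clustering HX HZ c1 c2 eps0)
  (heps : eps < 1000^-1 * Num.min (eps0 / 2)
                 (Num.min (c2 / (4 * c1)) ((css_dist HX HZ)%:R / (2 * c1 * n%:R))))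
  (Rep : {set {set vec n}} -> {set vec n})
  (hRep : forall y, y \in goodZ HZ (1000 * eps) ->
     Rep (translates HX HZ c1 (1000 * eps) y) \in translates HX HZ c1 (1000 * eps) y)
  (eZ : 'cV['F_2]_mZ -> vec n)
  (heZ : forall y, y \in goodZ HZ (1000 * eps) ->
     eZ (HZ *m y) \in coset y (kerH HZ) :&: Rep (translates HX HZ c1 (1000 * eps) y)) :
  forall y y' : vec n, y \in goodZ HZ (1000 * eps) ->
    y' \in cluster HX HZ c1 (1000 * eps) y ->
    y' + eZ (HZ *m y') \in coset (y + eZ (HZ *m y)) (dual (kerH HX)).
Proof.
move=> y y' y_good yy'.
have [c1_gt0 _] := hclust.
have [eps_lt eps_gap] := small_eps_bounds c1_gt0 heps.
have y'_good : y' \in goodZ HZ (1000 * eps) by case/setIdP: yy'.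
have /setIP[ye_Z ye_Rep] := heZ y y_good.
have /setIP[y'f_Z] := heZ y' y'_good.
rewrite (translates_eq hclust eps_lt eps_gap y_good yy') => y'f_Rep.
rewrite mem_cosetF2 in ye_Z; rewrite mem_cosetF2 in y'f_Z.
have /imsetP[c0 _ Rep_eq] := hRep y y_good.
rewrite Rep_eq in ye_Rep y'f_Rep.
rewrite mem_cosetF2; apply: (kerZ_mem_dual hclust eps_gap); first exact: kerHD ye_Z y'f_Z.
rewrite addrACA; apply: distC_close_sum; first by case/setIdP: yy'.
exact (cluster_close hclust eps_lt eps_gap ye_Rep y'f_Rep).
Qed.
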